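(* Let $\alpha\in(0,1]$. For $x\geqslant1$ define the sequence $\{z_k(x)\}_{k\geqslant-1}$ by $z_{-1}(x)=1$, $z_0(x)=x$ and $$\alpha z_{k+1}-z_k+\frac1{z_k}+(1-\alpha)z_{k-1}-\frac1{z_{k-1}}=0\qquad(k\geqslant0).$$ Then for every $k\geqslant0$, $z_k(x)$ is well defined (i.e. no division by zero occurs) for all $x\geqslant1$, $z_k$ is a strictly increasing smooth function of $x$ on $[1,\infty)$, $z_k(1)=1$, and $z_k(x)\to\infty$ as $x\to\infty$. *)

From Stdlib Require Import Reals.
From Coquelicot Require Import Coquelicot.
Open Scope R_scope.

(* zpair alpha n x = (z_{n-1}(x), z_n(x)), for n >= 0.
   Initial values z_{-1}(x) = 1, z_0(x) = x; the recurrence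
     alpha z_{k+1} - z_k + 1/z_k + (1-alpha) z_{k-1} - 1/z_{k-1} = 0
   solved for z_{k+1}:
     z_{k+1} = (z_k - 1/z_k - (1-alpha) z_{k-1} + 1/z_{k-1}) / alpha.
   Division is total in Stdlib (x/0 unspecified); the theorem asserts that
   the denominators z_k(x) never vanish for x >= 1. *)
Fixpoint zpair (alpha : R) (n : nat) (x : R) : R * R :=
  match n with
  | O => (1, x)
  | S m =>
      let p := zpair alpha m x in
      let zprev := fst p in
      let zk := snd p in
      (zk, (zk - / zk - (1 - alpha) * zprev + / zprev) / alpha)
  end.

Definition z (alpha : R) (k : nat) (x : R) : R := snd (zpair alpha k x).

(* The recurrence telescopes: alpha z_{k+1} - (1 - alpha) z_k + 1/z_k does not
   depend on k, and equals alpha (x + 1) at k = 0.  Hence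
   z_{k+1} = x + 1 + ((1 - alpha) z_k - 1/z_k) / alpha, a first-order recurrence
   whose right-hand side is increasing in x and in z_k > 0, and is at least x
   as soon as z_k >= 1.  Induction on k then gives z_k(x) >= x (so z_k never
   vanishes and tends to infinity), strict monotonicity and z_k(1) = 1.
   Smoothness also follows by induction, on an open neighbourhood of [1, oo)
   on which z_k stays positive. *)
From Stdlib Require Import Reals Lra.
From Coquelicot Require Import Coquelicot.
Open Scope R_scope.

(* Unlike the pointwise [ex_derive_n], this set-wise notion is closed under
   sums, products and inverses by a plain induction on [n]. *)
Fixpoint ex_derive_n_on (U : R -> Prop) (n : nat) (f : R -> R) : Prop :=
  match n with
  | O => True
  | S m => (forall x, U x -> ex_derive f x) /\ ex_derive_n_on U m (Derive f)
  end.

Lemma ex_derive_n_on_subset (U V : R -> Prop) n f :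
  (forall x, V x -> U x) -> ex_derive_n_on U n f -> ex_derive_n_on V n f.
Proof.
  intros HVU; revert f; induction n as [|n IH]; simpl; auto.
  intros f [Hf HDf]; split; auto.
Qed.

Lemma ex_derive_n_on_S U n f : ex_derive_n_on U (S n) f -> ex_derive_n_on U n f.
Proof.
  revert f; induction n as [|n IH]; simpl; auto.
  intros f [Hf HDf]; split; auto.
Qed.

Lemma ex_derive_n_on_ex_derive_n U n f x :
  ex_derive_n_on U n f -> U x -> ex_derive_n f n x.
Proof.
  destruct n as [|n]; [easy|].
  revert f; induction n as [|n IH]; intros f [Hf HDf] Hx; [now apply Hf|].
  simpl in IH |- *.
  eapply ex_derive_ext; [|exact (IH (Derive f) HDf Hx)].
  intros t.
  pose proof (Derive_n_comp f n 1 t) as E; rewrite Nat.add_1_r in E.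
  simpl in E |- *; rewrite <- E; reflexivity.
Qed.

Section DerivableOnOpen.

Variable U : R -> Prop.
Hypothesis HU : open U.

Lemma ex_derive_n_on_ext n f g :
  (forall x, U x -> f x = g x) -> ex_derive_n_on U n f -> ex_derive_n_on U n g.
Proof.
  revert f g; induction n as [|n IH]; simpl; auto.
  intros f g Hfg [Hf HDf].
  assert (Hloc : forall x, U x -> locally x (fun y => f y = g y)).
  { intros x Hx; apply (filter_imp U); [intros y; apply Hfg | now apply HU]. }
  split.
  - intros x Hx; exact (ex_derive_ext_loc f g x (Hloc x Hx) (Hf x Hx)).
  - apply (IH (Derive f)); auto.
    intros x Hx; exact (Derive_ext_loc f g x (Hloc x Hx)).
Qed.

Lemma ex_derive_n_on_const n c : ex_derive_n_on U n (fun _ => c).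
Proof.
  revert c; induction n as [|n IH]; simpl; auto.
  intros c; split; [intros; apply ex_derive_const|].
  apply (ex_derive_n_on_ext n (fun _ => 0)); auto.
  intros x _; now rewrite Derive_const.
Qed.

Lemma ex_derive_n_on_id n : ex_derive_n_on U n (fun x => x).
Proof.
  destruct n as [|n]; simpl; auto.
  split; [intros; apply ex_derive_id|].
  apply (ex_derive_n_on_ext n (fun _ => 1)); [|apply ex_derive_n_on_const].
  intros x _; symmetry; apply Derive_id.
Qed.

Lemma ex_derive_n_on_plus n f g :
  ex_derive_n_on U n f -> ex_derive_n_on U n g ->
  ex_derive_n_on U n (fun x => f x + g x).
Proof.
  revert f g; induction n as [|n IH]; simpl; auto.
  intros f g [Hf HDf] [Hg HDg]; split.
  - intros x Hx; apply (ex_derive_plus f g x); auto.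
  - apply (ex_derive_n_on_ext n (fun x => Derive f x + Derive g x)); auto.
    intros x Hx; rewrite Derive_plus; auto.
Qed.

Lemma ex_derive_n_on_mult n f g :
  ex_derive_n_on U n f -> ex_derive_n_on U n g ->
  ex_derive_n_on U n (fun x => f x * g x).
Proof.
  revert f g; induction n as [|n IH]; simpl; auto.
  intros f g Hfn Hgn.
  pose proof (ex_derive_n_on_S U n f Hfn) as Hf'.
  pose proof (ex_derive_n_on_S U n g Hgn) as Hg'.
  destruct Hfn as [Hf HDf], Hgn as [Hg HDg]; split.
  - intros x Hx; apply (ex_derive_mult f g x); auto.
  - apply (ex_derive_n_on_ext n (fun x => Derive f x * g x + f x * Derive g x)).
    + intros x Hx; rewrite Derive_mult; auto.
    + apply ex_derive_n_on_plus; auto.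
Qed.

Lemma ex_derive_n_on_inv n f :
  (forall x, U x -> f x <> 0) -> ex_derive_n_on U n f ->
  ex_derive_n_on U n (fun x => / f x).
Proof.
  intros Hnz; revert f Hnz; induction n as [|n IH]; simpl; auto.
  intros f Hnz Hfn.
  pose proof (ex_derive_n_on_S U n f Hfn) as Hf'.
  destruct Hfn as [Hf HDf]; split.
  - intros x Hx; apply ex_derive_inv; auto.
  - apply (ex_derive_n_on_ext n (fun x => -1 * Derive f x * (/ f x * / f x))).
    + intros x Hx; rewrite Derive_inv by auto; field; auto.
    + repeat apply ex_derive_n_on_mult; auto using ex_derive_n_on_const.
Qed.

End DerivableOnOpen.

Lemma open_and_pos (U : R -> Prop) (f : R -> R) :
  open U -> (forall x, U x -> continuous f x) -> open (fun x => U x /\ 0 < f x).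
Proof.
  intros HU Hf x [Hx Hfx].
  apply filter_and; [now apply HU|].
  exact (Hf x Hx (fun u => 0 < u) (open_gt 0 _ Hfx)).
Qed.

Definition zstep (alpha x t : R) : R := x + 1 + ((1 - alpha) * t - / t) / alpha.

Section Recurrence.

Variable alpha : R.
Hypothesis halpha : 0 < alpha <= 1.

Let alpha_neq0 : alpha <> 0.
Proof. lra. Qed.

Lemma zpair_invariant k x :
  alpha * snd (zpair alpha k x)
  = (1 - alpha) * fst (zpair alpha k x) - / fst (zpair alpha k x) + alpha * (x + 1).
Proof.
  induction k as [|k IH]; simpl.
  - rewrite Rinv_1; ring.
  - destruct (zpair alpha k x) as [zprev zk]; simpl in *.
    rewrite Rmult_div_assoc, Rmult_div_r by auto.
    lra.
Qed.

Lemma z_S k x : z alpha (S k) x = zstep alpha x (z alpha k x).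
Proof.
  apply (Rmult_eq_reg_l alpha); auto.
  unfold z, zstep; rewrite zpair_invariant; simpl.
  (* hiding [/ z] keeps [field] from asking for [z <> 0] *)
  set (w := (1 - alpha) * _ - _); field; auto.
Qed.

Lemma zstep_ge x t : 1 <= t -> x <= zstep alpha x t.
Proof.
  intros Ht; unfold zstep.
  assert (/ t <= 1) by (rewrite <- Rinv_1; apply Rinv_le_contravar; lra).
  assert (1 - alpha <= (1 - alpha) * t) by nra.
  assert (- alpha / alpha <= ((1 - alpha) * t - / t) / alpha).
  { apply Rmult_le_compat_r; [left; apply Rinv_0_lt_compat|]; lra. }
  replace (- alpha / alpha) with (-1) in * by (field; auto).
  lra.
Qed.

Lemma zstep_lt x y s t :
  0 < s <= t -> x < y -> zstep alpha x s < zstep alpha y t.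
Proof.
  intros Hst Hxy; unfold zstep.
  assert (/ t <= / s) by (apply Rinv_le_contravar; lra).
  assert ((1 - alpha) * s <= (1 - alpha) * t) by (apply Rmult_le_compat_l; lra).
  assert (((1 - alpha) * s - / s) / alpha <= ((1 - alpha) * t - / t) / alpha).
  { apply Rmult_le_compat_r; [left; apply Rinv_0_lt_compat|]; lra. }
  lra.
Qed.

Lemma z_ge_id k x : 1 <= x -> x <= z alpha k x.
Proof.
  intros Hx; induction k as [|k IH]; [unfold z; simpl; lra|].
  rewrite z_S; apply zstep_ge; lra.
Qed.

Lemma z_at_1 k : z alpha k 1 = 1.
Proof.
  induction k as [|k IH]; [reflexivity|].
  rewrite z_S, IH; unfold zstep; rewrite Rinv_1; field; auto.
Qed.

Lemma z_increasing k x y : 1 <= x -> x < y -> z alpha k x < z alpha k y.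
Proof.
  intros Hx Hxy; induction k as [|k IH]; [unfold z; simpl; lra|].
  rewrite !z_S; apply zstep_lt; auto.
  pose proof (z_ge_id k x Hx); lra.
Qed.

Lemma ex_derive_n_on_z_S U n k :
  open U -> (forall x, U x -> 0 < z alpha k x) ->
  ex_derive_n_on U n (z alpha k) -> ex_derive_n_on U n (z alpha (S k)).
Proof.
  intros HU Hpos Hz.
  assert (Hnz : forall x, U x -> z alpha k x <> 0)
    by (intros x Hx; specialize (Hpos x Hx); lra).
  apply (ex_derive_n_on_ext U HU n (fun x =>
    x + 1 + ((1 - alpha) * z alpha k x + -1 * / z alpha k x) * / alpha)).
  - intros x Hx; rewrite z_S; unfold zstep; field; auto.
  - repeat first [apply ex_derive_n_on_plus | apply ex_derive_n_on_mult
                 | apply ex_derive_n_on_inv];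
      auto using ex_derive_n_on_const, ex_derive_n_on_id.
Qed.

Lemma z_ex_derive_n_on_nbhd k : exists U : R -> Prop,
  open U /\ (forall x, 1 <= x -> U x) /\ (forall x, U x -> 0 < z alpha k x) /\
  forall n, ex_derive_n_on U n (z alpha k).
Proof.
  induction k as [|k [U [HU [H1U [Hpos Hz]]]]].
  - exists (fun x => 0 < x); repeat split; auto using open_gt.
    + intros x Hx; lra.
    + intros n; apply ex_derive_n_on_id, open_gt.
  - assert (HzS : forall n, ex_derive_n_on U n (z alpha (S k)))
      by (intros n; apply ex_derive_n_on_z_S; auto).
    exists (fun x => U x /\ 0 < z alpha (S k) x); split; [|split; [|split]].
    + apply open_and_pos; auto.
      intros x Hx; apply (ex_derive_continuous (z alpha (S k))).
      exact (proj1 (HzS 1%nat) x Hx).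
    + intros x Hx; split; auto.
      pose proof (z_ge_id (S k) x Hx); lra.
    + intros x [_ Hx]; exact Hx.
    + intros n; apply (ex_derive_n_on_subset U); [now intros x []|apply HzS].
Qed.

End Recurrence.

Theorem lemma2 (alpha : R) (halpha : 0 < alpha <= 1) (k : nat) :
  (* well defined: no division by zero (z_{-1} = 1 is trivially nonzero) *)
  (forall x : R, 1 <= x -> z alpha k x <> 0) /\
  (* strictly increasing on [1, oo) *)
  (forall x y : R, 1 <= x -> x < y -> z alpha k x < z alpha k y) /\
  (* smooth on [1, oo): derivatives of every order exist at every x >= 1 *)
  (forall (n : nat) (x : R), 1 <= x -> ex_derive_n (z alpha k) n x) /\
  z alpha k 1 = 1 /\
  is_lim (z alpha k) p_infty p_infty.
Proof.
  split; [|split; [|split; [|split]]].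
  - intros x Hx; pose proof (z_ge_id alpha halpha k x Hx); lra.
  - exact (z_increasing alpha halpha k).
  - intros n x Hx.
    destruct (z_ex_derive_n_on_nbhd alpha halpha k) as [U [_ [H1U [_ Hz]]]].
    exact (ex_derive_n_on_ex_derive_n U n _ x (Hz n) (H1U x Hx)).
  - exact (z_at_1 alpha halpha k).
  - apply (is_lim_le_p_loc (fun x => x)); [|apply is_lim_id].
    exists 1; intros x Hx; apply z_ge_id; auto; lra.
Qed.
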